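(* Let $(X,d)$ be a complete metric space, $\lambda>0$, and $\ell\in\mathrm{LSC}(X)$ bounded with $\inf_X\ell=0$. Then there exists a unique solution of $(\mathcal{G}_\lambda)$. Moreover, this solution is bounded and Lipschitz.
   Context: $\mathrm{LSC}(X)$ is the set of real-valued lower semicontinuous functions on $X$. Global slope: $G[u](x)=\sup_{y\neq x}\frac{(u(x)-u(y))_+}{d(x,y)}$ if $u(x)<+\infty$, $G[u](x)=+\infty$ otherwise. Equation $(\mathcal{G}_\lambda)$: a solution is a lower semicontinuous $u:X\to\mathbb{R}\cup\{+\infty\}$ with $\inf_Xu=0$ and $\lambda u(x)+G[u](x)=\ell(x)$ for all $x\in X$. *)

(* reals are an abstract R : realType,
   extended reals \bar R model R \cup {+oo} (values -oo excluded explicitly). *)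
From mathcomp Require Import all_boot all_order all_algebra.
From mathcomp Require Import all_classical all_reals all_analysis.
Set Implicit Arguments. Unset Strict Implicit. Unset Printing Implicit Defensive.
Import Order.TTheory GRing.Theory Num.Theory.
Local Open Scope classical_set_scope.
Local Open Scope ring_scope.

Definition is_metric (R : realType) (X : Type) (d : X -> X -> R) : Prop :=
  (forall x y, 0 <= d x y) /\
  (forall x y, d x y = 0 <-> x = y) /\
  (forall x y, d x y = d y x) /\
  (forall x y z, d x z <= d x y + d y z).

Definition d_cauchy (R : realType) (X : Type) (d : X -> X -> R) (s : nat -> X) : Prop :=
  forall e : R, 0 < e -> exists N : nat, forall m n : nat,
    (N <= m)%N -> (N <= n)%N -> d (s m) (s n) < e.

Definition d_converges (R : realType) (X : Type) (d : X -> X -> R) (s : nat -> X) (x : X) : Prop :=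
  forall e : R, 0 < e -> exists N : nat, forall n : nat, (N <= n)%N -> d (s n) x < e.

Definition complete_metric (R : realType) (X : Type) (d : X -> X -> R) : Prop :=
  forall s : nat -> X, d_cauchy d s -> exists x, d_converges d s x.

Definition lsc (R : realType) (X : Type) (d : X -> X -> R) (u : X -> \bar R) : Prop :=
  forall (x : X) (t : \bar R), (t < u x)%E ->
    exists2 delta : R, 0 < delta & forall y, d x y < delta -> (t < u y)%E.

(* global slope; for the sup over y <> x we adjoin 0 (all quotients are >= 0),
   so that the sup over an empty family is 0 *)
Definition global_slope (R : realType) (X : Type) (d : X -> X -> R) (u : X -> \bar R)
  (x : X) : \bar R :=
  if u x == +oo%E then +oo%E
  else ereal_sup [set z : \bar R | z = 0%E \/
         exists2 y : X, y <> x & z = (maxe (u x - u y) 0 * ((d x y)^-1)%:E)%E].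

Definition solves_G (R : realType) (X : Type) (d : X -> X -> R) (lam : R) (l : X -> R)
  (u : X -> \bar R) : Prop :=
  (forall x, u x != -oo%E) /\
  lsc d u /\
  ereal_inf (range u) = 0%E /\
  (forall x, (lam%:E * u x + global_slope d u x)%E = (l x)%:E).

From mathcomp Require Import all_boot all_order all_algebra.
From mathcomp Require Import all_classical all_reals all_analysis.
From mathcomp Require Import lra.
Import Order.TTheory GRing.Theory Num.Theory.
Local Open Scope classical_set_scope.
Local Open Scope ring_scope.
Set Implicit Arguments. Unset Strict Implicit.

(** Perron's method.  Call [u : X -> R] a subsolution if [u >= 0] and
    [lam u + G[u] <= l].  Subsolutions are [sup |l|]-Lipschitz and bounded by
    [sup |l| / lam], so the pointwise supremum [U] of all of them is again a
    subsolution.  If [G[U] x0 < l x0 - lam U x0] at some [x0], lower semicontinuity of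
    [l] would allow raising [U] by a small cone around [x0] without leaving the
    subsolutions, contradicting maximality: hence [U] solves (G_lam).
    Uniqueness is a comparison principle: every solution is finite and a
    supersolution, and if a subsolution [v] exceeded a solution [w] somewhere,
    Ekeland's variational principle applied to the Lipschitz function [v - w] on the
    complete space [X] would give a point where the two inequalities are
    incompatible. *)

Lemma exists_invSn_lt (R : realType) (e : R) : 0 < e -> exists n : nat, n.+1%:R^-1 < e.
Proof.
move=> e0; exists (Num.truncn e^-1).
by rewrite -[e in _ < e]invrK ltf_pV2 ?posrE ?invr_gt0 ?ltr0n ?truncnS_gt.
Qed.

Lemma ereal_inf_EFin_eq0 (R : realType) (T : Type) (f : T -> R) :
  ereal_inf (range (fun x => (f x)%:E)) = 0%E <->
  (forall x, 0 <= f x) /\ (forall e, 0 < e -> exists x, f x < e).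
Proof.
split=> [f_inf|[f_ge0 f_small]].
  split=> [x|e e0].
    have : (ereal_inf (range (fun x => (f x)%:E)) <= (f x)%:E)%E.
      by apply: ereal_inf_lbound; exists x.
    by rewrite f_inf lee_fin.
  have : (ereal_inf (range (fun x => (f x)%:E)) < e%:E)%E by rewrite f_inf lte_fin.
  by move=> /ereal_inf_lt [_ [x _ <-]]; rewrite lte_fin; exists x.
apply/le_anti/andP; split; last by apply: le_ereal_inf_tmp => _ [x _ <-]; rewrite lee_fin.
apply/lee_addgt0Pr => e e0; rewrite add0e; have [x fx] := f_small e e0.
apply: (@le_trans _ _ (f x)%:E); last by rewrite lee_fin ltW.
by apply: ereal_inf_lbound; exists x.
Qed.

Section MetricSpace.
Variables (R : realType) (X : Type) (d : X -> X -> R).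
Hypothesis hd : is_metric d.

Lemma metric_ge0 x y : 0 <= d x y. Proof. by case: hd. Qed.

Lemma metric_xx x : d x x = 0. Proof. by case: hd => _ [/(_ x x) [_ ->]]. Qed.

Lemma metric_sym x y : d x y = d y x. Proof. by case: hd => _ [_ []]. Qed.

Lemma metric_triangle x y z : d x z <= d x y + d y z.
Proof. by case: hd => _ [_ [_]]. Qed.

Lemma metric_gt0 x y : x <> y -> 0 < d x y.
Proof.
case: hd => d_ge0 [d_eq0 _] xy; rewrite lt_neqAle d_ge0 andbT eq_sym.
by apply/eqP => /d_eq0.
Qed.

Lemma lipschitz_lsc (v : X -> R) (L : R) :
  (forall x y, `|v x - v y| <= L * d x y) -> lsc d (fun x => (v x)%:E).
Proof.
move=> v_lip x [r| |] //; last by exists 1 => // y _; rewrite ltNyr.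
rewrite lte_fin => rv; exists ((v x - r) / (`|L| + 1)).
  by rewrite divr_gt0 ?subr_gt0 // ltr_wpDl.
move=> y /= dxy; rewrite lte_fin.
have : d x y * (`|L| + 1) < v x - r by rewrite -ltr_pdivlMr // ltr_wpDl.
have := v_lip x y; rewrite ler_norml => /andP [_ vxy].
have : L * d x y <= `|L| * d x y by rewrite ler_wpM2r ?metric_ge0 ?ler_norm.
have := metric_ge0 x y; lra.
Qed.

Hypothesis hc : complete_metric d.

Section Ekeland.
Variables (psi : X -> R) (K B c : R).
Hypotheses (c_gt0 : 0 < c) (K_ge0 : 0 <= K)
  (psi_lip : forall x y, psi x - psi y <= K * d x y) (psi_ub : forall x, psi x <= B).

(* The Bishop-Phelps order of Ekeland's principle. *)
Let dominates x y := c * d x y <= psi y - psi x.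

Let dominates_refl x : dominates x x.
Proof. by rewrite /dominates metric_xx mulr0 subrr. Qed.

Let dominates_trans x y z : dominates x y -> dominates y z -> dominates x z.
Proof.
rewrite /dominates => xy yz.
have : c * d x z <= c * d x y + c * d y z by rewrite -mulrDr ler_pM2l ?metric_triangle.
lra.
Qed.

Let dominates_closed x (s : nat -> X) y N : d_converges d s y ->
  (forall m, (N <= m)%N -> dominates x (s m)) -> dominates x y.
Proof.
rewrite /dominates => s_y xs; apply/ler_addgt0Pr => e e0.
have cK_gt0 : 0 < c + K by rewrite ltr_wpDr.
have [N' sN'] := s_y (e / (c + K)) (divr_gt0 e0 cK_gt0).
pose m := maxn N N'; have := xs m (leq_maxl _ _).
have : (c + K) * d (s m) y < e by rewrite mulrC -ltr_pdivlMr // sN' ?leq_maxr.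
have : c * d x y <= c * d x (s m) + c * d (s m) y.
  by rewrite -mulrDr ler_pM2l ?metric_triangle.
have := psi_lip (s m) y; lra.
Qed.

Let dominates_near_sup x e : 0 < e ->
  exists y, dominates x y /\ forall z, dominates x z -> psi z <= psi y + e.
Proof.
move=> e0; pose E := [set psi z | z in dominates x].
have supE : has_sup E.
  by split; [exists (psi x), x | exists B => _ [z _ <-]].
have [_ [y xy <-] y_near] := sup_adherent e0 supE.
exists y; split => // z xz.
have : psi z <= sup E by apply: ub_le_sup; [case: supE | exists z].
lra.
Qed.

Let dominates_diam x y e : dominates x y ->
  (forall z, dominates x z -> psi z <= psi y + e) ->
  forall z, dominates y z -> c * d y z <= e.
Proof.
move=> xy y_near z yz; have := y_near z (dominates_trans xy yz).
rewrite /dominates in yz; lra.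
Qed.

Theorem ekeland x0 : exists2 x, psi x0 <= psi x &
  forall y, y <> x -> psi y - psi x < c * d x y.
Proof.
have [eps eps_gt0 eps_small] : exists2 eps : nat -> R,
    (forall n, 0 < eps n) & forall e, 0 < e -> exists n, eps n < e.
  by exists (fun n => n.+1%:R^-1) => [n|]; [rewrite invr_gt0 ltr0n | exact: exists_invSn_lt].
have /choice [next nextP] : forall p : X * nat, exists y, dominates p.1 y /\
    forall z, dominates p.1 z -> psi z <= psi y + eps p.2.
  by case=> x n; exact: dominates_near_sup.
pose xs := fix xs n := if n is n'.+1 then next (xs n', n') else x0.
have xs_step n : dominates (xs n) (xs n.+1) /\
    forall z, dominates (xs n) z -> psi z <= psi (xs n.+1) + eps n := nextP (xs n, n).
have xs_dom n m : (n <= m)%N -> dominates (xs n) (xs m).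
  move=> /subnKC <-; elim: (m - n)%N => [|k IH]; first by rewrite addn0.
  by rewrite addnS; apply: dominates_trans IH (proj1 (xs_step _)).
have close n y z : dominates (xs n.+1) y -> dominates (xs n.+1) z -> c * d y z <= 2 * eps n.
  have [xs_next xs_near] := xs_step n.
  move=> /(dominates_diam xs_next xs_near) yd /(dominates_diam xs_next xs_near) zd.
  have : c * d y z <= c * d (xs n.+1) y + c * d (xs n.+1) z.
    by rewrite -mulrDr ler_pM2l // (metric_sym (xs n.+1)) metric_triangle.
  lra.
have xs_cauchy : d_cauchy d xs.
  move=> e e0; have /eps_small [N N_lt] : 0 < c * e / 2 by rewrite divr_gt0 ?mulr_gt0.
  exists N.+1 => m n Nm Nn; rewrite -(ltr_pM2l c_gt0).
  have := close N _ _ (xs_dom _ _ Nm) (xs_dom _ _ Nn); lra.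
have [x xs_x] := hc xs_cauchy.
have xs_dom_x n : dominates (xs n) x by apply: (dominates_closed xs_x) => m; exact: xs_dom.
exists x.
  have := xs_dom_x 0%N; rewrite /dominates.
  have := mulr_ge0 (ltW c_gt0) (metric_ge0 x0 x); lra.
move=> y yx; rewrite ltNge; apply/negP => xy.
have cd_gt0 : 0 < c * d x y := mulr_gt0 c_gt0 (metric_gt0 (not_eq_sym yx)).
have /eps_small [N N_lt] : 0 < c * d x y / 2 by rewrite divr_gt0.
have := close N _ _ (xs_dom_x N.+1) (dominates_trans (xs_dom_x N.+1) xy); lra.
Qed.

End Ekeland.

Lemma global_slope_EFin (u : X -> R) x :
  global_slope d (fun z => (u z)%:E) x = ereal_sup [set s : \bar R | s = 0%E \/
    exists2 y, y <> x & s = (Num.max (u x - u y) 0 / d x y)%:E].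
Proof.
have EFin_quotient y : (maxe ((u x)%:E - (u y)%:E) 0 * ((d x y)^-1)%:E)%E =
    (Num.max (u x - u y) 0 / d x y)%:E by rewrite -EFinB -EFin_max -EFinM.
rewrite /global_slope /=; congr ereal_sup; apply/seteqP; split=> s [->|[y yx ->]];
  by [left | right; exists y; rewrite ?EFin_quotient].
Qed.

Lemma global_slope_le (u : X -> R) x (a : R) :
  (global_slope d (fun z => (u z)%:E) x <= a%:E)%E <->
  0 <= a /\ forall y, u x - u y <= a * d x y.
Proof.
rewrite global_slope_EFin; split=> [slope_le|[a_ge0 u_lip]].
  split=> [|y].
    by rewrite -lee_fin; apply: le_trans slope_le; apply: ereal_sup_ubound; left.
  have [->|yx] := pselect (y = x); first by rewrite subrr metric_xx mulr0.
  have dxy := metric_gt0 (not_eq_sym yx).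
  have : ((Num.max (u x - u y) 0 / d x y)%:E <= a%:E)%E.
    by apply: le_trans slope_le; apply: ereal_sup_ubound; right; exists y.
  by rewrite lee_fin ler_pdivrMr // ge_max => /andP [].
apply: ge_ereal_sup => _ [->|[y yx ->]]; rewrite lee_fin //.
have dxy := metric_gt0 (not_eq_sym yx).
by rewrite ler_pdivrMr // ge_max u_lip mulr_ge0 ?metric_ge0.
Qed.

Lemma global_slope_gt (u : X -> R) x (a : R) : 0 <= a ->
  (a%:E < global_slope d (fun z => (u z)%:E) x)%E ->
  exists2 y, y <> x & a * d x y < u x - u y.
Proof.
move=> a_ge0; rewrite global_slope_EFin => /ereal_sup_gt [_ [->|[y yx ->]]].
  by rewrite lte_fin ltNge a_ge0.
have dxy := metric_gt0 (not_eq_sym yx).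
rewrite lte_fin ltr_pdivlMr // lt_max => /orP [a_lt|]; first by exists y.
by rewrite ltNge mulr_ge0 ?metric_ge0.
Qed.

Section Equation.
Variables (lam : R) (l : X -> R).
Hypothesis lam_gt0 : 0 < lam.

(* [lam u + G[u] <= l] (with [u >= 0]) and [lam u + G[u] >= l] for finite [u], with the
   global slope unfolded; see [subsolutionP] and [solution_supersolution]. *)
Definition subsolution (u : X -> R) : Prop :=
  [/\ forall x, 0 <= u x, forall x, lam * u x <= l x &
      forall x y, u x - u y <= (l x - lam * u x) * d x y].

Definition supersolution (u : X -> R) : Prop :=
  forall x a, 0 <= a -> a < l x - lam * u x ->
  exists2 y, y <> x & a * d x y < u x - u y.

Lemma subsolutionP u : (forall x, 0 <= u x) ->
  subsolution u <->
  forall x, (global_slope d (fun z => (u z)%:E) x <= (l x - lam * u x)%:E)%E.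
Proof.
move=> u_ge0; split=> [[_ ul uL] x|u_slope].
  by apply/global_slope_le; rewrite subr_ge0.
split=> // x; first by have /global_slope_le [] := u_slope x; rewrite subr_ge0.
by have /global_slope_le [] := u_slope x.
Qed.

Lemma solves_G_EFin w : solves_G d lam l w -> exists v : X -> R, w = (fun x => (v x)%:E).
Proof.
case=> wNy [_ [_ w_eq]]; exists (fun x => fine (w x)); apply/funext => x.
move: (w_eq x) (wNy x); rewrite /global_slope; case: (w x) => [r| |] //=.
by rewrite mulry gtr0_sg // mul1e.
Qed.

Lemma solves_G_slope v : solves_G d lam l (fun x => (v x)%:E) ->
  forall x, global_slope d (fun z => (v z)%:E) x = (l x - lam * v x)%:E.
Proof.
case=> _ [_ [_ v_eq]] x; move: (v_eq x).
case: (global_slope _ _ x) => [g| |]; rewrite -EFinM.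
- by rewrite -EFinD => -[v_eq_x]; congr EFin; lra.
- by rewrite addey.
- by rewrite addeNy.
Qed.

Lemma solution_subsolution v : solves_G d lam l (fun x => (v x)%:E) -> subsolution v.
Proof.
move=> sv; have [_ [_ [/ereal_inf_EFin_eq0 [v_ge0 _] _]]] := sv.
by apply/subsolutionP => // x; rewrite solves_G_slope.
Qed.

Lemma solution_supersolution v : solves_G d lam l (fun x => (v x)%:E) -> supersolution v.
Proof.
by move=> sv x a a_ge0 a_lt; apply: global_slope_gt; rewrite ?solves_G_slope ?lte_fin.
Qed.

Lemma subsolution_max U phi k : 0 <= k -> subsolution U ->
  (forall z y, phi z - phi y <= k * d z y) ->
  (forall z, U z < phi z -> k <= l z - lam * phi z) ->
  subsolution (fun z => Num.max (U z) (phi z)).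
Proof.
move=> k_ge0 [U_ge0 Ul UL] phi_lip phi_sub; split=> [z|z|z y].
- by rewrite le_max U_ge0.
- case: (leP (phi z) (U z)) => [_|Uz]; first exact: Ul.
  have := phi_sub z Uz; lra.
- have : U y <= Num.max (U y) (phi y) by rewrite le_max lexx.
  have : phi y <= Num.max (U y) (phi y) by rewrite le_max lexx orbT.
  case: (leP (phi z) (U z)) => [_|Uz]; first by have := UL z y; lra.
  have : k * d z y <= (l z - lam * phi z) * d z y.
    by rewrite ler_wpM2r ?metric_ge0 ?phi_sub.
  have := phi_lip z y; lra.
Qed.

Hypothesis l_lsc : lsc d (fun x => (l x)%:E).

Lemma subsolution_bump U x0 : subsolution U ->
  (global_slope d (fun z => (U z)%:E) x0 < (l x0 - lam * U x0)%:E)%E ->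
  exists2 V, subsolution V & U x0 < V x0.
Proof.
move=> sU; have slope_ge0 : (0 <= global_slope d (fun z => (U z)%:E) x0)%E.
  by rewrite global_slope_EFin; apply: ereal_sup_ubound; left.
case E: (global_slope _ _ x0) slope_ge0 => [g| |] //; rewrite lee_fin lte_fin => g_ge0 g_lt.
have /global_slope_le [_ U_lip] : (global_slope d (fun z => (U z)%:E) x0 <= g%:E)%E.
  by rewrite E.
have [s s_def s_gt0] : exists2 s, s = l x0 - lam * U x0 - g & 0 < s.
  by exists (l x0 - lam * U x0 - g); rewrite // subr_gt0.
have /l_lsc [del del_gt0 l_near] : ((l x0 - s / 4)%:E < (l x0)%:E)%E.
  by rewrite lte_fin; lra.
have [h [h_gt0 lam_h h_del]] : exists h, [/\ 0 < h, lam * h <= s / 8 & h <= del * s / 4].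
  exists (Num.min (s / 8 / lam) (del * s / 4)); split.
  - by rewrite lt_min !divr_gt0 ?mulr_gt0.
  - apply: (@le_trans _ _ (lam * (s / 8 / lam))); first by rewrite ler_pM2l // ge_min lexx.
    by rewrite mulrC divfK ?lexx ?gt_eqF.
  - by rewrite ge_min lexx orbT.
(* Where the cone [U x0 + h - (g + s/2) d(., x0)] exceeds [U], the slope bound at [x0]
   forces [d(., x0) < del], so [l] is still above [l x0 - s/4] there. *)
have k_ge0 : 0 <= g + s / 2 by lra.
exists (fun z => Num.max (U z) (U x0 + h - (g + s / 2) * d z x0)); last first.
  by rewrite metric_xx mulr0 subr0 lt_max ltrDl h_gt0 orbT.
apply: (subsolution_max k_ge0 sU) => [z y|z Uz].
  have : (g + s / 2) * d y x0 <= (g + s / 2) * (d z y + d z x0).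
    by rewrite ler_wpM2l // (metric_sym z y) metric_triangle.
  lra.
have := U_lip z; rewrite metric_sym => Uz_lb.
have dz : d z x0 < del.
  have : s / 2 * d z x0 < s / 2 * del by have := mulr_gt0 s_gt0 del_gt0; lra.
  by rewrite ltr_pM2l ?divr_gt0.
have := l_near z; rewrite metric_sym lte_fin => /(_ dz) lz.
have := mulr_ge0 (ltW lam_gt0) (mulr_ge0 k_ge0 (metric_ge0 z x0)); lra.
Qed.

Lemma maximal_subsolution_slope U : subsolution U ->
  (forall V, subsolution V -> forall x, V x <= U x) ->
  forall x, global_slope d (fun z => (U z)%:E) x = (l x - lam * U x)%:E.
Proof.
move=> sU U_max x; apply/le_anti/andP; split.
  by have [U_ge0 _ _] := sU; move: x; apply/subsolutionP.
rewrite leNgt; apply/negP => /(subsolution_bump sU) [V sV].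
by apply/negP; rewrite -leNgt U_max.
Qed.

Variable M : R.
Hypothesis l_le : forall x, `|l x| <= M.

Lemma subsolution_norm_le u : subsolution u -> forall x, `|u x| <= M / lam.
Proof.
case=> u_ge0 ul _ x; rewrite ger0_norm // ler_pdivlMr // mulrC.
exact: le_trans (ul x) (le_trans (ler_norm _) (l_le x)).
Qed.

Lemma subsolution_lipschitz u : subsolution u ->
  forall x y, `|u x - u y| <= M * d x y.
Proof.
case=> u_ge0 ul uL.
have half x y : u x - u y <= M * d x y.
  apply: le_trans (uL x y) _; rewrite ler_wpM2r ?metric_ge0 //.
  have := le_trans (ler_norm _) (l_le x); have := mulr_ge0 (ltW lam_gt0) (u_ge0 x); lra.
move=> x y; rewrite ler_norml half andbT.
have := half y x; rewrite metric_sym; lra.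
Qed.

Lemma subsolution_le_supersolution v w : subsolution v -> subsolution w ->
  supersolution w -> forall x, v x <= w x.
Proof.
move=> sv sw w_super x; rewrite leNgt; apply/negP => wv.
pose delta := v x - w x; have delta_gt0 : 0 < delta by rewrite subr_gt0.
pose psi z := v z - w z.
have psi_lip y z : psi y - psi z <= (M + M) * d y z.
  have := subsolution_lipschitz sv y z; have := subsolution_lipschitz sw y z.
  rewrite !ler_norml /psi mulrDl => /andP [w_lb _] /andP [_ v_ub]; lra.
have psi_ub z : psi z <= M / lam.
  have := le_trans (ler_norm _) (subsolution_norm_le sv z).
  case: sw => w_ge0 _ _; have := w_ge0 z; rewrite /psi; lra.
have M_ge0 : 0 <= M + M by have := le_trans (normr_ge0 _) (l_le x); lra.
have c_gt0 : 0 < lam * delta / 4 by rewrite divr_gt0 ?mulr_gt0.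
have [x' psi_x' x'_max] := ekeland c_gt0 M_ge0 psi_lip psi_ub x.
case: sv => _ vl vL.
(* At the Ekeland point [x'], the supersolution inequality of [w] for the slope [a]
   beats the subsolution inequality of [v] by [lam delta / 2 * d], more than the
   [lam delta / 4 * d] that Ekeland allows. *)
have lam_delta := mulr_gt0 lam_gt0 delta_gt0.
pose a := l x' - lam * v x' + lam * delta / 2.
have a_ge0 : 0 <= a by have := vl x'; rewrite /a; lra.
have a_lt : a < l x' - lam * w x'.
  have : lam * delta <= lam * psi x' by rewrite ler_pM2l //; exact: psi_x'.
  rewrite /a /psi; lra.
have [y yx w_drop] := w_super x' a a_ge0 a_lt.
have : lam * delta / 4 * d x' y <= lam * delta / 2 * d x' y.
  by rewrite ler_wpM2r ?metric_ge0 //; lra.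
have := x'_max y yx; have := vL x' y; move: w_drop; rewrite /a /psi; lra.
Qed.

Hypothesis l_inf : ereal_inf (range (fun x => (l x)%:E)) = 0%E.

Let l_ge0 : forall x, 0 <= l x := proj1 (proj1 (ereal_inf_EFin_eq0 l) l_inf).

Lemma subsolution0 : subsolution (fun=> 0).
Proof.
split=> [//|x|x y]; first by rewrite mulr0 l_ge0.
by rewrite subrr mulr0 subr0 mulr_ge0 ?l_ge0 ?metric_ge0.
Qed.

Definition perron x := sup [set u x | u in subsolution].

Let perron_has_sup x : has_sup [set u x | u in subsolution].
Proof.
split; first by exists 0, (fun=> 0); first exact: subsolution0.
by exists (l x / lam) => _ [u [_ ul _] <-]; rewrite ler_pdivlMr // mulrC.
Qed.

Lemma perron_ge u : subsolution u -> forall x, u x <= perron x.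
Proof. by move=> su x; apply: ub_le_sup; [case: (perron_has_sup x) | exists u]. Qed.

Lemma perron_le x b : (forall u, subsolution u -> u x <= b) -> perron x <= b.
Proof.
move=> u_le; apply: ge_sup; first by case: (perron_has_sup x).
by move=> _ [u su <-]; apply: u_le.
Qed.

Lemma perron_subsolution : subsolution perron.
Proof.
split=> [x|x|x y]; first exact: perron_ge subsolution0 x.
  rewrite mulrC -ler_pdivlMr //; apply: perron_le => u [_ ul _].
  by rewrite ler_pdivlMr // mulrC.
have d_ge0 := metric_ge0 x y.
have p_gt0 : 0 < 1 + lam * d x y by have := mulr_ge0 (ltW lam_gt0) d_ge0; lra.
(* The subsolution inequality at [x] is [u x * (1 + lam d) <= u y + l x d], which passes
   to the supremum. *)
suff : perron x * (1 + lam * d x y) <= perron y + l x * d x y by lra.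
rewrite -ler_pdivlMr //; apply: perron_le => u su; rewrite ler_pdivlMr //.
have [_ _ uL] := su; have := uL x y; have := perron_ge su y; lra.
Qed.

Lemma perron_solves : solves_G d lam l (fun x => (perron x)%:E).
Proof.
have [P_ge0 Pl _] := perron_subsolution.
split; first by [].
split; first exact: lipschitz_lsc (subsolution_lipschitz perron_subsolution).
split.
  apply/ereal_inf_EFin_eq0; split=> // e e0.
  have : (ereal_inf (range (fun x => (l x)%:E)) < (lam * e)%:E)%E.
    by rewrite l_inf lte_fin mulr_gt0.
  move=> /ereal_inf_lt [_ [x _ <-]]; rewrite lte_fin => lx; exists x.
  by rewrite -(ltr_pM2l lam_gt0); apply: le_lt_trans (Pl x) lx.
move=> x; rewrite (maximal_subsolution_slope perron_subsolution perron_ge).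
by rewrite -EFinM -EFinD addrC subrK.
Qed.

Lemma solves_G_perron w : solves_G d lam l w -> w = (fun x => (perron x)%:E).
Proof.
move=> sw; have [v w_v] := solves_G_EFin sw; rewrite w_v in sw *.
have [sub super] := (solution_subsolution sw, solution_supersolution sw).
apply/funext => x; congr EFin; apply/le_anti/andP; split; first exact: perron_ge.
exact: subsolution_le_supersolution perron_subsolution sub super x.
Qed.

End Equation.
End MetricSpace.

Theorem corollary3p15 (R : realType) (X : Type) (d : X -> X -> R)
  (hd : is_metric d) (hc : complete_metric d)
  (lam : R) (hlam : 0 < lam) (l : X -> R)
  (hl : lsc d (fun x => (l x)%:E))
  (hb : exists M : R, forall x, `|l x| <= M)
  (hinf : ereal_inf (range (fun x => (l x)%:E)) = 0%E) :
  exists u : X -> \bar R,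
    solves_G d lam l u /\
    (forall w : X -> \bar R, solves_G d lam l w -> w = u) /\
    exists v : X -> R,
      (forall x, u x = (v x)%:E) /\
      (exists M : R, forall x, `|v x| <= M) /\
      (exists L : R, forall x y, `|v x - v y| <= L * d x y).
Proof.
have [M l_le] := hb.
have perron_sub := perron_subsolution hd hlam hinf.
exists (fun x => (perron d lam l x)%:E); split.
  exact: (perron_solves hd hlam hl l_le hinf).
split; first exact: (solves_G_perron hd hc hlam l_le hinf).
exists (perron d lam l); split=> //; split.
  by exists (M / lam); exact: (subsolution_norm_le hlam l_le perron_sub).
by exists M; exact: (subsolution_lipschitz hd hlam l_le perron_sub).
Qed.
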